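(* Let $m\ge 1$, $k\ge 2$ and $n\ge k-1$. The polynomials $$(x_1\cdots x_n)^m(x_1^{l_1}\cdots x_n^{l_n})^{m+1}(x_1^d+\cdots+x_n^d),$$ where $(d,l_1,\ldots,l_n)$ ranges over all tuples of nonnegative integers with $d+(m+1)(l_1+\cdots+l_n)=(m+1)(k-1)-1$, are linearly independent over $\mathbb{R}$. Hence they form a basis of $W_{m,k}$.
   Context: $W_{m,k}$ denotes the real span of exactly these polynomials. *)

From HB Require Import structures.
From mathcomp Require Import all_boot all_order all_algebra.
From mathcomp Require Import reals.
From mathcomp Require Import mpoly.
Set Implicit Arguments. Unset Strict Implicit. Unset Printing Implicit Defensive.
Import Order.TTheory GRing.Theory Num.Theory.
Local Open Scope ring_scope.

(* Index type for tuples (d, l_1, ..., l_n) with all entries bounded by N;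
   the actual index set is cut out by the predicate [admissible]. *)
Definition idxT (n N : nat) : finType := ('I_N.+1 * {ffun 'I_n -> 'I_N.+1})%type.

Definition admissible (n m k : nat) (t : idxT n ((m.+1) * (k.-1))) : bool :=
  (t.1 : nat) + m.+1 * (\sum_(i < n) (t.2 i : nat)) == (m.+1 * k.-1).-1.

Definition Wpoly (R : realType) (n m : nat) (d : nat) (l : 'I_n -> nat)
  : {mpoly R[n]} :=
  (\prod_(i < n) 'X_i) ^+ m
  * (\prod_(i < n) 'X_i ^+ l i) ^+ m.+1
  * (\sum_(i < n) 'X_i ^+ d).

Definition Wfamily_lin_indep (R : realType) (n m k : nat) : Prop :=
  forall c : idxT n (m.+1 * k.-1) -> R,
    \sum_(t | @admissible n m k t) c t *: @Wpoly R n m t.1 (fun i => t.2 i) = 0 ->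
    forall t, @admissible n m k t -> c t = 0.

From HB Require Import structures.
From mathcomp Require Import all_boot all_order all_algebra.
From mathcomp Require Import reals.
From mathcomp Require Import mpoly.
From mathcomp Require Import zify.
Set Implicit Arguments. Unset Strict Implicit. Unset Printing Implicit Defensive.
Import Order.TTheory GRing.Theory Num.Theory.
Local Open Scope ring_scope.

(* Expanding the last factor, Wpoly d l is the sum over j of the monomials
   x^(Wmonomial m d l j).  For an admissible (d, l), d is never a multiple of
   m + 1 (d = -1 mod m + 1), and since l_1 + ... + l_n < k - 1 <= n some l_i
   vanishes.  The i-th coordinate of the monomial x^(Wmonomial m d l i) is
   then m + d, which no other Wpoly d' l' with d' >= d can produce: this
   monomial certifies c (d, l) = 0 once all c (d', l') with d' < d are known
   to vanish, and induction on d concludes. *)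

Definition Wmonomial (n m d : nat) (l : 'I_n -> nat) (j : 'I_n) : 'X_{1..n} :=
  [multinom (m + m.+1 * l i + (i == j) * d)%N | i < n].

Lemma sum_mnm1E n (a : 'I_n -> nat) :
  (\sum_(i < n) U_(i) *+ a i)%MM = [multinom a i | i < n].
Proof. by rewrite [RHS]multinomUE_id; apply: eq_bigr => i _; rewrite mnmE. Qed.

Lemma WpolyE (R : realType) n m d (l : 'I_n -> nat) :
  @Wpoly R n m d l = \sum_(j < n) 'X_[Wmonomial m d l j].
Proof.
rewrite /Wpoly mulr_sumr; apply: eq_bigr => j _.
rewrite mprodXnE -[\prod_(i < n) 'X_i]/(\prod_(i < n) 'X_[R, U_(i)] ^+ 1).
rewrite mprodXnE !mpolyXn -!mpolyXD; congr mpolyX.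
apply/mnmP => i; rewrite mnmE !mnmDE !mulmnE !sum_mnm1E !mnmE.
by rewrite mul1n (eq_sym j) (mulnC (l i)).
Qed.

Lemma mcoeff_sumX (R : nzRingType) n (I : finType) (f : I -> 'X_{1..n}) mu :
  (\sum_j 'X_[R, f j])@_mu = (\sum_j (f j == mu))%:R.
Proof.
by rewrite raddf_sum natr_sum; apply: eq_bigr => j _; apply: mcoeffX.
Qed.

Section WmonomialSeparation.

Variables (R : realType) (n m d : nat) (l : 'I_n -> nat) (i : 'I_n).
Hypotheses (l_i0 : l i = 0%N) (d_ndvd : ~~ (m.+1 %| d)%N).

Lemma Wmonomial_eq d' (l' : 'I_n -> nat) j : (d <= d')%N ->
  Wmonomial m d' l' j = Wmonomial m d l i -> [/\ j = i, d' = d & l' =1 l].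
Proof.
move=> le_dd' /mnmP eq_mon; have := eq_mon i.
rewrite !mnmE eqxx l_i0 muln0 addn0 mul1n.
case: (altP (i =P j)) => [eq_ij | _]; last first.
  rewrite mul0n addn0 => eq_i.
  by case/negP: d_ndvd; apply/dvdnP; exists (l' i); lia.
subst j; rewrite mul1n => eq_i.
have l'_i0 : l' i = 0%N by lia.
split=> // [|x]; first by lia.
have [->|ne_xi] := eqVneq x i; first by rewrite l'_i0.
have := eq_mon x; rewrite !mnmE (negbTE ne_xi) !mul0n !addn0.
by move/eqP; rewrite eqn_add2l eqn_mul2l /= => /eqP.
Qed.

Lemma mcoeff_Wpoly_self :
  (@Wpoly R n m d l)@_(Wmonomial m d l i) = 1.
Proof.
rewrite WpolyE mcoeff_sumX (bigD1 i) //= eqxx big1 ?addn0 // => j ne_ji.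
apply/eqP; rewrite eqb0; apply/eqP => /Wmonomial_eq [] // eq_ji.
by rewrite eq_ji eqxx in ne_ji.
Qed.

Lemma mcoeff_Wpoly_other d' (l' : 'I_n -> nat) :
  (d <= d')%N -> ~ (d' = d /\ l' =1 l) ->
  (@Wpoly R n m d' l')@_(Wmonomial m d l i) = 0.
Proof.
move=> le_dd' ne_dl; rewrite WpolyE mcoeff_sumX big1 // => j _.
apply/eqP; rewrite eqb0; apply/eqP => /Wmonomial_eq [] // _ eq_d eq_l.
exact: ne_dl.
Qed.

End WmonomialSeparation.

Lemma sum_lt_card_has0 n (a : 'I_n -> nat) :
  (\sum_(i < n) a i < n)%N -> exists i, a i = 0%N.
Proof.
move=> sum_lt; have [i /eqP ai0|a_pos] := pickP (fun i => a i == 0%N).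
  by exists i.
suff : (n <= \sum_(i < n) a i)%N by rewrite leqNgt sum_lt.
rewrite -[X in (X <= _)%N]card_ord -sum1_card; apply: leq_sum => x _.
by rewrite lt0n a_pos.
Qed.

Lemma idxT_eq n N (t t' : idxT n N) :
  (t'.1 : nat) = t.1 -> (forall x, (t'.2 x : nat) = t.2 x) -> t' = t.
Proof.
case: t t' => [d l] [d' l'] /= eq_d eq_l; congr pair; first exact: val_inj.
by apply/ffunP => x; apply: val_inj; apply: eq_l.
Qed.

Section Admissible.

Variables (n m k : nat).
Hypotheses (m_gt0 : (0 < m)%N) (k_gt1 : (1 < k)%N).

Lemma admissible_ndvd (t : idxT n (m.+1 * k.-1)) :
  admissible t -> ~~ (m.+1 %| t.1)%N.
Proof.
move=> /eqP adm_t; apply/negP => dvd_d.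
have dvd_pred : (m.+1 %| (m.+1 * k.-1).-1)%N.
  by rewrite -adm_t dvdn_addr ?dvdn_mulr.
have : (m.+1 %| (m.+1 * k.-1).-1 + 1)%N.
  by rewrite addn1 prednK ?dvdn_mulr // muln_gt0 /=; lia.
by rewrite dvdn_addr // dvdn1 eqSS (gtn_eqF m_gt0).
Qed.

Lemma admissible_sum_lt (t : idxT n (m.+1 * k.-1)) :
  admissible t -> (\sum_(i < n) (t.2 i : nat) < k.-1)%N.
Proof.
move=> /eqP adm_t; rewrite -(ltn_pmul2l (ltn0Sn m)).
apply: (@leq_ltn_trans (m.+1 * k.-1).-1); first by rewrite -adm_t leq_addl.
by rewrite ltn_predL muln_gt0 /=; lia.
Qed.

End Admissible.

Theorem lemma4p3 (R : realType) (m k n : nat) :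
  (1 <= m)%N -> (2 <= k)%N -> (k.-1 <= n)%N ->
  Wfamily_lin_indep R n m k.
Proof.
move=> m_gt0 k_gt1 le_kn c sum_eq0.
suff c0 d (t : idxT n (m.+1 * k.-1)) : (t.1 : nat) = d -> admissible t -> c t = 0.
  by move=> t; apply: c0.
elim/ltn_ind: d t => d IH t def_d adm_t.
pose l i := (t.2 i : nat).
have [i l_i0] : exists i, l i = 0%N.
  apply: sum_lt_card_has0.
  exact: leq_trans (admissible_sum_lt _ _ adm_t) le_kn.
have d_ndvd := admissible_ndvd m_gt0 k_gt1 adm_t; rewrite def_d in d_ndvd.
move/(congr1 (mcoeff (Wmonomial m d l i))): sum_eq0.
rewrite raddf_sum mcoeff0 (bigD1 t) //= mcoeffZ def_d.
rewrite (mcoeff_Wpoly_self R l_i0 d_ndvd) mulr1 big1 ?addr0 //.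
move=> t' /andP[adm_t' ne_t't].
rewrite mcoeffZ; have [lt_d'd|le_dd'] := ltnP t'.1 d.
  by rewrite (IH _ lt_d'd t') ?mul0r.
rewrite (mcoeff_Wpoly_other R l_i0 d_ndvd le_dd') ?mulr0 // => -[eq_d eq_l].
by move/eqP: ne_t't; apply; apply: idxT_eq; rewrite ?eq_d.
Qed.
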